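(* There is no LCL problem on cycles with mending radius between $\omega(1)$ and $o(n)$: if an LCL problem $\Pi$ on the family of all cycles is $T$-mendable for some function $T$ with $T(n)=o(n)$, then $\Pi$ is $T'$-mendable for some constant function $T'$.
   Context: A locally verifiable problem $\Pi$ on a graph family $\mathcal{G}$ is given by a set $\Sigma$ of input labels, a set $\Gamma$ of output labels and a verifier $\psi$ with verification radius $r$: $\psi(G,\lambda,v)\in\{\text{happy},\text{unhappy}\}$ depends only on the radius-$r$ neighborhood of $v$ (structure, inputs and outputs, up to isomorphism); $\lambda:V\to\Gamma$ is a solution if $\psi$ is happy everywhere. $\Pi$ is an LCL problem if $\Sigma,\Gamma$ are finite and all graphs in $\mathcal{G}$ have maximum degree bounded by a constant. Partial labelings are maps $\lambda:V\to\Gamma\cup\{\bot\}$; the relaxed verifier $\psi^*$ is happy at $v$ if some node within distance $r$ of $v$ has label $\bot$, and otherwise $\psi^*(G,\lambda,v)=\psi(G,\lambda',v)$ for any $\lambda':V\to\Gamma$ agreeing with $\lambda$ on the radius-$r$ neighborhood of $v$; $\psi^*$ accepts $\lambda$ if happy everywhere. Given $\lambda$ accepted by $\psi^*$ and node $v$, a $t$-mend of $\lambda$ at $v$ is a partial labeling $\mu$ accepted by $\psi^*$ with $\mu(v)\neq\bot$, $\mu(u)=\bot\Rightarrow\lambda(u)=\bot$, and $\mu(u)\neq\lambda(u)\Rightarrow\mathrm{dist}(u,v)\le t$. A verifier is $T$-mendable if for every $G\in\mathcal{G}$ with $n$ nodes, every $\lambda$ accepted by $\psi^*$ and every node $v$,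 a $T(n)$-mend at $v$ exists; $\Pi$ is $T$-mendable if some radius-$r$ verifier for $\Pi$ (accepting exactly the solutions of $\Pi$) is $T$-mendable. *)

From mathcomp Require Import all_boot.
Set Implicit Arguments.
Unset Strict Implicit.
Unset Printing Implicit Defensive.

Unset Implicit Arguments.
Definition cadj (n : nat) : rel 'I_n :=
  fun i j => (val j == (val i).+1 %% n) || (val i == (val j).+1 %% n).

Set Implicit Arguments.
Fixpoint within (V : finType) (e : rel V) (k : nat) (u w : V) : bool :=
  match k with
  | 0 => u == w
  | k'.+1 => (u == w) || [exists x, e u x && within e k' x w]
  end.

(* Isomorphism of the radius-r neighborhoods (induced subgraphs on the radius-r
   balls), rooted at v resp. v', preserving input labels a and output labels b. *)
Definition ball_iso (V V' : finType) (e : rel V) (e' : rel V') (A B : Type)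
  (r : nat) (a : V -> A) (b : V -> B) (a' : V' -> A) (b' : V' -> B)
  (v : V) (v' : V') : Prop :=
  exists f : V -> V',
    f v = v' /\
    (forall u, within e r v u -> within e' r v' (f u)) /\
    (forall u w, within e r v u -> within e r v w -> f u = f w -> u = w) /\
    (forall u', within e' r v' u' -> exists2 u, within e r v u & f u = u') /\
    (forall u w, within e r v u -> within e r v w -> e' (f u) (f w) = e u w) /\
    (forall u, within e r v u -> a' (f u) = a u /\ b' (f u) = b u).

(* A verifier on the family of cycles: psi n sigma lambda v (true = happy),
   for the n-cycle with inputs sigma and outputs lambda. *)
Definition verifier (Sigma Gamma : Type) :=
  forall n : nat, ('I_n -> Sigma) -> ('I_n -> Gamma) -> 'I_n -> bool.

Definition has_radius (Sigma Gamma : Type) (psi : verifier Sigma Gamma) (r : nat) :=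
  forall (n n' : nat) (s : 'I_n -> Sigma) (l : 'I_n -> Gamma)
         (s' : 'I_n' -> Sigma) (l' : 'I_n' -> Gamma) (v : 'I_n) (v' : 'I_n'),
    2 < n -> 2 < n' ->
    ball_iso (cadj n) (cadj n') r s l s' l' v v' ->
    psi n s l v = psi n' s' l' v'.

Definition solution (Sigma Gamma : Type) (psi : verifier Sigma Gamma) (n : nat)
  (s : 'I_n -> Sigma) (l : 'I_n -> Gamma) : Prop :=
  forall v, psi n s l v.

(* Relaxed verifier psi^* on partial labelings (None = bottom). *)
Definition relaxed (Sigma Gamma : Type) (psi : verifier Sigma Gamma) (r n : nat)
  (s : 'I_n -> Sigma) (l : 'I_n -> option Gamma) (v : 'I_n) : Prop :=
  (exists u, within (cadj n) r v u /\ l u = None) \/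
  (forall l' : 'I_n -> Gamma,
      (forall u, within (cadj n) r v u -> l u = Some (l' u)) -> psi n s l' v).

Definition accepts (Sigma Gamma : Type) (psi : verifier Sigma Gamma) (r n : nat)
  (s : 'I_n -> Sigma) (l : 'I_n -> option Gamma) : Prop :=
  forall v, relaxed psi r s l v.

Definition is_mend (Sigma Gamma : Type) (psi : verifier Sigma Gamma) (r n : nat)
  (s : 'I_n -> Sigma) (l : 'I_n -> option Gamma) (v : 'I_n) (t : nat)
  (mu : 'I_n -> option Gamma) : Prop :=
  accepts psi r s mu /\
  mu v <> None /\
  (forall u, mu u = None -> l u = None) /\
  (forall u, mu u <> l u -> within (cadj n) t v u).

Definition mendable_verifier (Sigma Gamma : Type) (psi : verifier Sigma Gamma)
  (r : nat) (T : nat -> nat) : Prop :=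
  forall n, 2 < n -> forall (s : 'I_n -> Sigma) (l : 'I_n -> option Gamma),
    accepts psi r s l -> forall v : 'I_n, exists mu, is_mend psi r s l v (T n) mu.

Definition verifier_for (Sigma Gamma : Type) (psi psi0 : verifier Sigma Gamma) : Prop :=
  forall n, 2 < n -> forall (s : 'I_n -> Sigma) (l : 'I_n -> Gamma),
    solution psi s l <-> solution psi0 s l.

Definition mendable_problem (Sigma Gamma : Type) (psi0 : verifier Sigma Gamma)
  (T : nat -> nat) : Prop :=
  exists (psi : verifier Sigma Gamma) (r : nat),
    has_radius psi r /\ verifier_for psi psi0 /\ mendable_verifier psi r T.

Definition little_o (T : nat -> nat) : Prop :=
  forall k, 0 < k -> exists N, forall n, N <= n -> k * T n <= n.

From mathcomp Require Import all_boot zify.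
Set Implicit Arguments.
Unset Strict Implicit.
Unset Printing Implicit Defensive.

(* Fix one large cycle length n0 and let t = T(n0), so 4t <= n0, and R = t + 2r.
   To mend an m-cycle with m > 2R at v, cut out the window of 2R+1 nodes centred
   at v and paste it into the n0-cycle, leaving all other nodes unlabelled; this
   partial labeling is still accepted, because every node whose r-ball leaves the
   window sees an unlabelled node.  A t-mend at the centre of the n0-cycle changes
   only nodes within distance t of the centre, which cannot wrap around since
   n0 > 2R + 1; their r-balls, and the r-balls of their r-neighbours, lie inside
   the window.  Pasting the window back into the m-cycle therefore yields a t-mend
   there, by locality of the verifier.  Cycles with m <= 2R have diameter below
   2R, so every mend of them is a 2R-mend. *)

Lemma mod_eq_small n x j : j < n -> x = j %[mod n] -> j = x \/ j + n <= x.
Proof.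
move=> hj; rewrite (modn_small hj) => <-; rewrite {2 4}(divn_eq x n).
by case: (x %/ n) => [|q]; [left | right; rewrite mulSn; lia].
Qed.

Section CycleArithmetic.

Variable n : nat.
Implicit Types (b u w x : 'I_n) (i j k d : nat).

Lemma ord_gt0 b : 0 < n.
Proof. exact: leq_ltn_trans (ltn_ord b). Qed.

Definition cshift b j : 'I_n := Ordinal (ltn_pmod (b + j) (ord_gt0 b)).

Definition coffset b u : nat := (u + n - b) %% n.

Lemma eq_cshift b i j : (cshift b i == cshift b j) = (i == j %[mod n]).
Proof. by rewrite -val_eqE /= eqn_modDl. Qed.

Lemma cshift_inj b i j : i < n -> j < n -> cshift b i = cshift b j -> i = j.
Proof. by move=> hi hj /eqP; rewrite eq_cshift !modn_small // => /eqP. Qed.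

Lemma cshift0 b : cshift b 0 = b.
Proof. by apply: val_inj; rewrite /= addn0 modn_small. Qed.

Lemma cshiftD b i j : cshift (cshift b i) j = cshift b (i + j).
Proof. by apply: val_inj; rewrite /= modnDml addnA. Qed.

Lemma cshiftDn b j : cshift b (j + n) = cshift b j.
Proof. by apply: val_inj; rewrite /= addnA modnDr. Qed.

Lemma cshiftn b : cshift b n = b.
Proof. by apply: val_inj; rewrite /= modnDr modn_small. Qed.

Lemma cshiftIl d u w : cshift u d = cshift w d -> u = w.
Proof.
move/eqP; rewrite -val_eqE /= eqn_modDr !modn_small // => /eqP; exact: val_inj.
Qed.

Lemma coffset_lt b u : coffset b u < n.
Proof. exact: ltn_pmod (ord_gt0 b). Qed.

Lemma cshift_coffset b u : cshift b (coffset b u) = u.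
Proof.
apply: val_inj; rewrite /= modnDmr.
have -> : b + (u + n - b) = u + n by have := ltn_ord b; lia.
by rewrite modnDr modn_small.
Qed.

Lemma coffset_cshift b j : j < n -> coffset b (cshift b j) = j.
Proof.
by move=> hj; apply: (@cshift_inj b) => //; [exact: coffset_lt | exact: cshift_coffset].
Qed.

Lemma cadj_cshift u x : cadj n u x = (x == cshift u 1) || (u == cshift x 1).
Proof. by rewrite /cadj -!val_eqE /= !addn1. Qed.

Lemma cadj_cshift_lt b i j : i.+1 < n -> j.+1 < n ->
  cadj n (cshift b i) (cshift b j) = (j == i.+1) || (i == j.+1).
Proof.
by move=> hi hj; rewrite cadj_cshift !cshiftD !eq_cshift !addn1 !modn_small // ltnW.
Qed.

Lemma withinP k u w :
  reflect (exists2 d, d <= k & w = cshift u d \/ u = cshift w d)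
          (within (cadj n) k u w).
Proof.
apply: (iffP idP).
  elim: k u => [|k IH] u /=.
    by move/eqP=> ->; exists 0 => //; left; rewrite cshift0.
  case/orP => [/eqP-> | /existsP[x /andP[]]].
    by exists 0 => //; left; rewrite cshift0.
  rewrite cadj_cshift => /orP[] /eqP-> /IH[[|d] hd [] H].
  - by exists 1 => //; left; rewrite H cshift0.
  - by exists 1 => //; left; rewrite H cshift0.
  - by exists d.+2 => //; left; rewrite H cshiftD.
  - by exists d; [lia | right; apply: (@cshiftIl 1); rewrite H cshiftD addn1].
  - by exists 1 => //; right; rewrite H cshift0.
  - by exists 1 => //; right; rewrite H cshift0.
  - by exists d; [lia | left; rewrite H cshiftD add1n].
  - by exists d.+2 => //; right; rewrite H cshiftD addn1.
elim: k u => [|k IH] u [d hd H] /=.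
  by move: hd H; rewrite leqn0 => /eqP->; rewrite !cshift0 => -[]->.
case: d hd H => [|d] hd H; first by case: H; rewrite cshift0 => ->; rewrite eqxx.
apply/orP; right; apply/existsP; case: H => H.
  exists (cshift u 1); rewrite cadj_cshift eqxx /=.
  by apply: IH; exists d => //; left; rewrite H cshiftD add1n.
exists (cshift w d); rewrite cadj_cshift cshiftD addn1 -H eqxx orbT /=.
by apply: IH; exists d => //; right.
Qed.

Lemma within_sym k u w : within (cadj n) k u w = within (cadj n) k w u.
Proof. by apply/withinP/withinP => -[d hd H]; exists d => //; tauto. Qed.

Lemma within_le k k' u w :
  k <= k' -> within (cadj n) k u w -> within (cadj n) k' u w.
Proof.
by move=> hk /withinP[d hd H]; apply/withinP; exists d => //; apply: leq_trans hk.
Qed.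

Lemma within_small_cycle k u w : n <= k.+1 -> within (cadj n) k u w.
Proof.
move=> hn; apply/withinP; exists (coffset u w); last by left; rewrite cshift_coffset.
by have := coffset_lt u w; lia.
Qed.

Lemma within_cshift b i j k :
  i <= j <= i + k -> within (cadj n) k (cshift b i) (cshift b j).
Proof.
move=> hij; apply/withinP; exists (j - i); first lia.
by left; rewrite cshiftD subnKC //; lia.
Qed.

Lemma within_cshift_cases b i j k : i < n -> j < n ->
  within (cadj n) k (cshift b i) (cshift b j) ->
  [|| (i <= j + k) && (j <= i + k), j + n <= i + k | i + n <= j + k].
Proof.
move=> hi hj /withinP[d hd []] /eqP; rewrite cshiftD eq_cshift => /eqP.
  by move/esym/(mod_eq_small hj); lia.
by move/esym/(mod_eq_small hi); lia.
Qed.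

Lemma ball_cshift b r u :
  within (cadj n) r (cshift b r) u <-> exists2 j, j <= r.*2 & u = cshift b j.
Proof.
split.
  case/withinP=> d hd [->|H]; first by exists (r + d); [lia | rewrite cshiftD].
  by exists (r - d); [lia | apply: (@cshiftIl d); rewrite -H cshiftD subnK].
case=> j hj ->; case: (leqP r j) => hrj; first by apply: within_cshift; lia.
by rewrite within_sym; apply: within_cshift; lia.
Qed.

End CycleArithmetic.

Definition transplant (X : Type) m n (a : 'I_m) (b : 'I_n) k
    (f : 'I_m -> X) (g : 'I_n -> X) : 'I_n -> X :=
  fun x => if coffset b x <= k then f (cshift a (coffset b x)) else g x.

Lemma transplant_cshift (X : Type) m n (a : 'I_m) (b : 'I_n) k f (g : 'I_n -> X) j :
  j <= k -> k < n -> transplant a b k f g (cshift b j) = f (cshift a j).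
Proof.
by move=> hj hk; rewrite /transplant coffset_cshift ?hj //; apply: leq_ltn_trans hk.
Qed.

Lemma transplant_out (X : Type) m n (a : 'I_m) (b : 'I_n) k f (g : 'I_n -> X) x :
  k < coffset b x -> transplant a b k f g x = g x.
Proof. by rewrite /transplant ltnNge => /negbTE->. Qed.

Section Locality.

Variables (Sigma : Type) (Gamma : eqType) (psi : verifier Sigma Gamma) (r : nat).

Lemma is_mend_widen n s (l mu : 'I_n -> option Gamma) v t t' :
  (forall u, within (cadj n) t v u -> within (cadj n) t' v u) ->
  is_mend psi r s l v t mu -> is_mend psi r s l v t' mu.
Proof. by move=> H [? [? [? near]]]; do 3!split => //; move=> u /near/H. Qed.

Lemma relaxed_local n s (l mu : 'I_n -> option Gamma) u :
  relaxed psi r s l u -> (forall w, within (cadj n) r u w -> mu w = l w) ->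
  relaxed psi r s mu u.
Proof.
move=> [[w [hw hN]] | hR] H; first by left; exists w; rewrite H.
by right=> L hL; apply: hR => w hw; rewrite -H //; apply: hL.
Qed.

Lemma ball_iso_window (A B : Type) m n (a : 'I_m) (b : 'I_n)
    (s : 'I_m -> A) (l : 'I_m -> B) (s' : 'I_n -> A) (l' : 'I_n -> B) :
  r.*2.+1 < m -> r.*2.+1 < n ->
  (forall j, j <= r.*2 -> s' (cshift b j) = s (cshift a j)) ->
  (forall j, j <= r.*2 -> l' (cshift b j) = l (cshift a j)) ->
  ball_iso (cadj m) (cadj n) r s l s' l' (cshift a r) (cshift b r).
Proof.
move=> hm hn hs hl; exists (fun u => cshift b (coffset a u)).
have offj j : j <= r.*2 -> coffset a (cshift a j) = j.
  by move=> hj; apply: coffset_cshift; lia.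
split; first by rewrite offj //; lia.
split.
  by move=> u /ball_cshift[j hj ->]; rewrite offj //; apply/ball_cshift; exists j.
split.
  move=> u w /ball_cshift[j hj ->] /ball_cshift[j' hj' ->]; rewrite !offj // => e.
  by rewrite (cshift_inj _ _ e) //; lia.
split.
  move=> u' /ball_cshift[j hj ->]; exists (cshift a j); last by rewrite offj.
  by apply/ball_cshift; exists j.
split.
  move=> u w /ball_cshift[j hj ->] /ball_cshift[j' hj' ->].
  by rewrite !offj // !cadj_cshift_lt //; lia.
by move=> u /ball_cshift[j hj ->]; rewrite offj // hs // hl.
Qed.

Hypothesis hr : has_radius psi r.

Lemma relaxed_window m n (a : 'I_m) (b : 'I_n) s l s' l' :
  2 < m -> 2 < n -> r.*2.+1 < m -> r.*2.+1 < n ->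
  (forall j, j <= r.*2 -> s' (cshift b j) = s (cshift a j)) ->
  (forall j, j <= r.*2 -> l' (cshift b j) = l (cshift a j)) ->
  relaxed psi r s l (cshift a r) -> relaxed psi r s' l' (cshift b r).
Proof.
move=> hm hn hrm hrn hs hl [[u [/ball_cshift[j hj ->] hN]] | hR].
  by left; exists (cshift b j); split; [apply/ball_cshift; exists j | rewrite hl].
right=> L' hL'.
pose L := transplant b a r.*2 L' (fun _ => L' b).
have hL j : j <= r.*2 -> L (cshift a j) = L' (cshift b j).
  by move=> hj; rewrite /L transplant_cshift // ltnW.
have <- : psi s L (cshift a r) = psi s' L' (cshift b r).
  by apply: hr => //; apply: ball_iso_window => // j hj; rewrite hL.
apply: hR => u /ball_cshift[j hj ->].
by rewrite hL // -hl //; apply: hL'; apply/ball_cshift; exists j.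
Qed.

Lemma relaxed_window_at m n (a : 'I_m) (b : 'I_n) k i s l s' l' :
  2 < m -> 2 < n -> r.*2.+1 < m -> r.*2.+1 < n -> r <= i -> i + r <= k ->
  (forall j, j <= k -> s' (cshift b j) = s (cshift a j)) ->
  (forall j, j <= k -> l' (cshift b j) = l (cshift a j)) ->
  relaxed psi r s l (cshift a i) -> relaxed psi r s' l' (cshift b i).
Proof.
move=> hm hn hrm hrn hri hik hs hl; rewrite -(subnK hri) -!cshiftD.
by apply: relaxed_window => // j hj; rewrite !cshiftD; [apply: hs | apply: hl]; lia.
Qed.

Lemma accepts_embed m n (a : 'I_m) (b : 'I_n) k s (l : 'I_m -> option Gamma) s' :
  2 < m -> 2 < n -> r.*2.+1 < m -> k.+1 < n ->
  (forall j, j <= k -> s' (cshift b j) = s (cshift a j)) ->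
  accepts psi r s l -> accepts psi r s' (transplant a b k l (fun _ => None)).
Proof.
move=> hm hn hrm hkn hs hl x; rewrite -(cshift_coffset b x).
have := coffset_lt b x; set i := coffset b x => hi.
have [/andP[hri hik] | outer] := boolP ((r <= i) && (i + r <= k)).
  apply: (relaxed_window_at (a := a) (k := k)) => //; [lia | exact: hs |].
  by move=> j hj; rewrite transplant_cshift //; lia.
have unlabelled j : k < j < n -> transplant a b k l (fun _ => None) (cshift b j) = None.
  by case/andP=> hkj hjn; rewrite transplant_out // coffset_cshift.
left; case: (ltnP k i) => hik.
  by exists (cshift b i); split; [apply: within_cshift; lia | apply: unlabelled; lia].
case: (ltnP i r) => hir.
  exists (cshift b n.-1); split; last by apply: unlabelled; lia.
  by rewrite -(cshiftDn b i) within_sym; apply: within_cshift; lia.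
exists (cshift b k.+1); split; last by apply: unlabelled; lia.
by apply: within_cshift; lia.
Qed.

Lemma accepts_patch m (a : 'I_m) k s (l mu : 'I_m -> option Gamma) :
  k < m -> accepts psi r s l ->
  (forall u, mu u <> l u -> r.*2 <= coffset a u /\ coffset a u + r.*2 <= k) ->
  (forall i, r <= i -> i + r <= k -> relaxed psi r s mu (cshift a i)) ->
  accepts psi r s mu.
Proof.
move=> hkm hl hchg hin u; rewrite -(cshift_coffset a u).
have := coffset_lt a u; set i := coffset a u => hi.
have [/andP[hri hik] | outer] := boolP ((r <= i) && (i + r <= k)); first exact: hin.
apply: relaxed_local (hl _) _ => w hw.
case: (mu w =P l w) => // /hchg; rewrite -(cshift_coffset a w) in hw.
have := within_cshift_cases hi (coffset_lt a w) hw; lia.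
Qed.

Lemma mend_transfer n0 t R m s (l : 'I_m -> option Gamma) v :
  t + r.*2 <= R -> 2 < n0 -> R.*2.+1 < n0 ->
  (forall s0 (l0 : 'I_n0 -> option Gamma), accepts psi r s0 l0 ->
     forall v0, exists mu0, is_mend psi r s0 l0 v0 t mu0) ->
  2 < m -> R.*2 < m -> accepts psi r s l -> exists mu, is_mend psi r s l v t mu.
Proof.
move=> htR hn0 hRn0 hmend0 hm hRm hl.
pose b0 : 'I_n0 := Ordinal (ltn_trans (isT : 0 < 2) hn0).
pose a := cshift v (m - R).
have av : cshift a R = v by rewrite cshiftD subnK ?cshiftn //; lia.
pose sT := transplant a b0 R.*2 s (fun _ => s v).
pose lT := transplant a b0 R.*2 l (fun _ => None).
have hsT j : j <= R.*2 -> sT (cshift b0 j) = s (cshift a j).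
  by move=> hj; rewrite /sT transplant_cshift //; lia.
have hlT j : j <= R.*2 -> lT (cshift b0 j) = l (cshift a j).
  by move=> hj; rewrite /lT transplant_cshift //; lia.
have accT : accepts psi r sT lT by apply: accepts_embed hl => //; lia.
have [mu0 [acc0 [def0 [none0 near0]]]] := hmend0 sT lT accT (cshift b0 R).
pose mu := transplant b0 a R.*2 mu0 l.
have hmu j : j <= R.*2 -> mu (cshift a j) = mu0 (cshift b0 j).
  by move=> hj; rewrite /mu transplant_cshift.
have near u : mu u <> l u -> R <= coffset a u + t /\ coffset a u <= R + t.
  rewrite -[in mu u](cshift_coffset a u) -[in l u](cshift_coffset a u).
  have := coffset_lt a u; set i := coffset a u => hi.
  case: (leqP i R.*2) => hiR; last first.
    by rewrite /mu transplant_out ?coffset_cshift // => /(_ erefl).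
  rewrite hmu // -hlT // => /near0 hw.
  have := within_cshift_cases (_ : R < n0) (_ : i < n0) hw; lia.
exists mu; split; [|split; [|split]].
- apply: (accepts_patch (a := a) (k := R.*2)) => // [u /near | i hri hiR]; first lia.
  apply: (relaxed_window_at (a := b0) (k := R.*2)) (acc0 _) => //; [lia | lia |].
  by move=> j hj; rewrite hsT.
- by rewrite -av hmu //; lia.
- move=> u; rewrite -(cshift_coffset a u); have := coffset_lt a u.
  set i := coffset a u => hi; case: (leqP i R.*2) => hiR.
    by rewrite hmu // -hlT // => /none0.
  by rewrite /mu transplant_out ?coffset_cshift.
- move=> u /near hu; rewrite -av -(cshift_coffset a u).
  case: (leqP R (coffset a u)) => hRu; first by apply: within_cshift; lia.
  by rewrite within_sym; apply: within_cshift; lia.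
Qed.

End Locality.

Unset Implicit Arguments.
Theorem corollary8p2 (Sigma Gamma : finType) (psi0 : verifier Sigma Gamma)
  (r0 : nat) (T : nat -> nat) :
  has_radius psi0 r0 ->
  little_o T ->
  mendable_problem psi0 T ->
  exists c : nat, mendable_problem psi0 (fun _ => c).
Proof.
move=> _ small_T [psi [r [hr [hpsi hmend]]]].
have [N hN] := small_T 4 isT.
pose n0 := N + r * 8 + 8; pose t := T n0; pose R := t + r.*2.
have ht : 4 * t <= n0 by apply: hN; lia.
exists R.*2, psi, r; split=> //; split=> // m hm s l hl v.
have [hmR | hRm] := leqP m R.*2.
  have [mu hmu] := hmend m hm s l hl v; exists mu.
  by apply: is_mend_widen hmu => u _; apply: within_small_cycle; lia.
have hn0 : 2 < n0 by lia.
have hRn0 : R.*2.+1 < n0 by lia.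
have [mu hmu] := mend_transfer hr v (leqnn R) hn0 hRn0 (hmend n0 hn0) hm hRm hl.
exists mu; apply: is_mend_widen hmu => u; apply: within_le; lia.
Qed.
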